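(* Assume the hypotheses of the existence theorem stated in the context, let $\alpha=\max\{\|H(X)\|:X\in N_\varepsilon(\mathcal P)\}$, and fix $\mu\ge\dfrac{\Lambda+(L_0+L_1)\alpha}{1-C_0-C_1}$. Let $\delta>0$ and let $W=(w_1,\dots,w_n)\in C^1([-\delta,\delta];\mathbb R^n)$ with $w_1([-\delta,\delta])\subseteq[-\delta,\delta]$ satisfy $W'(t)=H(t;W(t),W(w_1(t));W'(t),W'(w_1(t)))$ for $|t|\le\delta$, $W(0)=0$, $W'(0)=P$, and $(t;W(t),W(w_1(t));W'(t),W'(w_1(t)))\in N_\varepsilon(\mathcal P)$ for $|t|\le\delta$. Then $W\in\mathcal C(\delta)$.
   Context: Setting (existence theorem hypotheses): $\|\cdot\|$ is a norm on $\mathbb R^n$; $H=(h_1,\dots,h_n)$ is continuous from an open subset of $\mathbb R^{4n+1}$ to $\mathbb R^n$, written $H(t;\zeta^0,\zeta^1;\xi^0,\xi^1)$; $P=(p_1,\dots,p_n)$ satisfies $P=H(0;\mathbf0,\mathbf0;P,P)$ and $|p_1|\le1$; $\mathcal P=(0;\mathbf0,\mathbf0;P,P)$; $N_\varepsilon(\mathcal P)=\{|t|+\|\zeta^0\|+\|\zeta^1\|+\|\xi^0-P\|+\|\xi^1-P\|\le\varepsilon\}$ lies in the domain, and on it: $H$ is $\Lambda$-Lipschitz in $t$; $\|H(t;\bar\zeta^0,\bar\zeta^1;\xi^0,\xi^1)-H(t;\zeta^0,\zeta^1;\xi^0,\xi^1)\|\le L_0\|\bar\zeta^0-\zeta^0\|+L_1\|\bar\zeta^1-\zeta^1\|$;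 $\|H(t;\zeta^0,\zeta^1;\bar\xi^0,\bar\xi^1)-H(t;\zeta^0,\zeta^1;\xi^0,\xi^1)\|\le C_0\|\bar\xi^0-\xi^0\|+C_1\|\bar\xi^1-\xi^1\|$ with $C_0+C_1<1$; and $|h_1|\le1$. For $Z=(z_1,\dots,z_n)$ let $V_Z(t)=(t;Z(t),Z(z_1(t));Z'(t),Z'(z_1(t)))$. The set $\mathcal C(\delta)$ consists of all $Z\in C^1([-\delta,\delta];\mathbb R^n)$ such that: $Z(0)=0$, $Z'(0)=P$; $|z_1(t)|\le|t|$; $\|Z(t)-Z(\bar t)\|\le\alpha|t-\bar t|$; $|z_1(t)-z_1(\bar t)|\le|t-\bar t|$; $\|Z'(t)-Z'(\bar t)\|\le\mu|t-\bar t|$; and $V_Z(t)\in N_\varepsilon(\mathcal P)$, for all $t,\bar t\in[-\delta,\delta]$. *)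

From Stdlib Require Import Reals.
From mathcomp Require Import ssreflect ssrfun ssrbool eqtype ssrnat fintype.
Open Scope R_scope.

Definition Vec (n : nat) := 'I_n -> R.

Definition vzero {n} : Vec n := fun _ => 0.
Definition vsub {n} (x y : Vec n) : Vec n := fun i => x i - y i.
Definition vadd {n} (x y : Vec n) : Vec n := fun i => x i + y i.
Definition vscale {n} (c : R) (x : Vec n) : Vec n := fun i => c * x i.

Definition is_norm {n} (nrm : Vec n -> R) : Prop :=
  (forall x, 0 <= nrm x) /\
  (forall x, nrm x = 0 -> x = vzero) /\
  (forall c x, nrm (vscale c x) = Rabs c * nrm x) /\
  (forall x y, nrm (vadd x y) <= nrm x + nrm y).

(* A point (t; zeta0, zeta1; xi0, xi1) of R^{4n+1} *)
Definition Pt (n : nat) := (R * Vec n * Vec n * Vec n * Vec n)%type.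

Definition dist5 {n} (nrm : Vec n -> R) (X Y : Pt n) : R :=
  let '(t, a, b, c, d) := X in
  let '(t', a', b', c', d') := Y in
  Rabs (t - t') + nrm (vsub a a') + nrm (vsub b b') + nrm (vsub c c')
  + nrm (vsub d d').

Definition is_open {n} (nrm : Vec n -> R) (D : Pt n -> Prop) : Prop :=
  forall X, D X -> exists r, 0 < r /\ forall Y, dist5 nrm X Y < r -> D Y.

Definition continuous_on {n} (nrm : Vec n -> R) (D : Pt n -> Prop)
  (H : Pt n -> Vec n) : Prop :=
  forall X, D X -> forall e, 0 < e -> exists d, 0 < d /\
    forall Y, D Y -> dist5 nrm X Y < d -> nrm (vsub (H Y) (H X)) < e.

Definition calP {n} (P : Vec n) : Pt n := (0, vzero, vzero, P, P).

Definition in_N {n} (nrm : Vec n -> R) (eps : R) (P : Vec n) (X : Pt n) : Prop :=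
  dist5 nrm X (calP P) <= eps.

Definition deriv_within (a b : R) (f : R -> R) (t l : R) : Prop :=
  forall e, 0 < e -> exists d, 0 < d /\
    forall h, h <> 0 -> Rabs h < d -> a <= t + h <= b ->
      Rabs ((f (t + h) - f t) / h - l) < e.

Definition cont_within (a b : R) (f : R -> R) (t : R) : Prop :=
  forall e, 0 < e -> exists d, 0 < d /\
    forall s, a <= s <= b -> Rabs (s - t) < d -> Rabs (f s - f t) < e.

Definition C1_on {n} (delta : R) (Z Z' : R -> Vec n) : Prop :=
  forall t, - delta <= t <= delta -> forall i : 'I_n,
    deriv_within (- delta) delta (fun s => Z s i) t (Z' t i) /\
    cont_within (- delta) delta (fun s => Z' s i) t.

(* V_Z(t) = (t; Z(t), Z(z_1(t)); Z'(t), Z'(z_1(t))), i1 the first index *)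
Definition VZ {n} (i1 : 'I_n) (Z Z' : R -> Vec n) (t : R) : Pt n :=
  (t, Z t, Z (Z t i1), Z' t, Z' (Z t i1)).

Definition in_calC {n} (nrm : Vec n -> R) (i1 : 'I_n) (eps : R) (P : Vec n)
  (alpha mu delta : R) (Z Z' : R -> Vec n) : Prop :=
  C1_on delta Z Z' /\
  Z 0 = vzero /\ Z' 0 = P /\
  (forall t, - delta <= t <= delta -> Rabs (Z t i1) <= Rabs t) /\
  (forall t tb, - delta <= t <= delta -> - delta <= tb <= delta ->
     nrm (vsub (Z t) (Z tb)) <= alpha * Rabs (t - tb)) /\
  (forall t tb, - delta <= t <= delta -> - delta <= tb <= delta ->
     Rabs (Z t i1 - Z tb i1) <= Rabs (t - tb)) /\
  (forall t tb, - delta <= t <= delta -> - delta <= tb <= delta ->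
     nrm (vsub (Z' t) (Z' tb)) <= mu * Rabs (t - tb)) /\
  (forall t, - delta <= t <= delta -> in_N nrm eps P (VZ i1 Z Z' t)).

From Stdlib Require Import Reals Lra Classical FunctionalExtensionality.
From mathcomp Require Import ssreflect ssrfun ssrbool eqtype ssrnat seq fintype.
Open Scope R_scope.

(* Since W' = H(V_W) with |H| <= alpha and |h_1| <= 1 on N_eps(P), the mean value
   inequality makes W alpha-Lipschitz and w_1 1-Lipschitz.  Changing one group of
   variables of H at a time along a path that stays in N_eps(P), the Lipschitz
   conditions on H then bound the oscillation g of W' at scale r by
   (Lam + (L0 + L1) alpha) r + (C0 + C1) g, and C0 + C1 < 1 gives g <= mu r. *)

Ltac vec_ext :=
  apply: functional_extensionality => ?; rewrite /vsub /vadd /vscale /vzero; ring.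

Lemma real_induction (Q : R -> Prop) s t : s <= t -> Q s ->
  (forall u, s < u <= t -> (forall v, s <= v < u -> Q v) -> Q u) ->
  (forall u, s <= u < t -> Q u ->
     exists d, 0 < d /\ forall v, u < v < u + d -> v <= t -> Q v) ->
  forall v, s <= v <= t -> Q v.
Proof.
move=> Hst Qs Hclosed Hopen.
pose E u := s <= u <= t /\ forall v, s <= v <= u -> Q v.
have Es : E s by split=> [|v Hv]; [lra | have -> : v = s by lra].
have [m [Hub Hlub]] := completeness E (ex_intro _ t (fun u Eu => proj2 (proj1 Eu)))
  (ex_intro _ s Es).
have Hsm : s <= m by apply: Hub.
have Hmt : m <= t by apply: Hlub => u [[_ ?] _].
have Qbelow v : s <= v < m -> Q v.
  move=> Hv; apply: NNPP => nQv.
  suff : m <= v by lra.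
  apply: Hlub => u [_ Qu]; apply: Rnot_lt_le => Hvu; apply: nQv; apply: Qu; lra.
have Em : E m.
  split=> // v Hv; case: (Rle_lt_or_eq_dec v m (proj2 Hv)) => [?|->]; first by apply: Qbelow; lra.
  case: (Rle_lt_or_eq_dec s m Hsm) => [?|<-] //; exact: Hclosed.
suff Emt : m = t by move=> v Hv; apply: (proj2 Em); lra.
apply: NNPP => Hmt'.
have [d [Hd Qnext]] := Hopen m ltac:(lra) (proj2 Em m ltac:(lra)).
set u := Rmin t (m + d / 2).
have Hut : u <= t := Rmin_l _ _.
have Hud : u <= m + d / 2 := Rmin_r _ _.
have Hmu_lt : m < u by apply: Rmin_glb_lt; lra.
suff : E u by move/Hub; lra.
split=> [|v Hv]; first lra.
case: (Rle_lt_dec v m) => Hvm; first by apply: (proj2 Em); lra.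
apply: Qnext; lra.
Qed.

Lemma mean_value_le (g : R -> R) (s t a : R) : s <= t -> 0 <= a -> g s <= 0 ->
  (forall u, s <= u <= t -> forall e, 0 < e -> exists d, 0 < d /\
     forall v, s <= v <= t -> Rabs (v - u) < d ->
       Rabs (g v - g u) <= (a + e) * Rabs (v - u)) ->
  g t <= a * (t - s).
Proof.
move=> Hst Ha Hgs Hloc.
have barrier e : 0 < e -> forall v, s <= v <= t -> g v <= (a + e) * (v - s).
  move=> He; apply: real_induction => //; first by rewrite Rminus_diag Rmult_0_r.
  - move=> u Hu Qbelow; apply: Rnot_lt_le => Hgu.
    set eta := g u - (a + e) * (u - s).
    have [d [Hd Hd1]] := Hloc u ltac:(lra) 1 Rlt_0_1.
    set k := Rmin (u - s) (Rmin (d / 2) (eta / (2 * (a + 1)))).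
    have Hk0 : 0 < k.
      apply: Rmin_pos; first lra; apply: Rmin_pos; first lra.
      apply: Rdiv_lt_0_compat; rewrite /eta; lra.
    have Hk1 : k <= u - s := Rmin_l _ _.
    have Hk2 : k <= d / 2 := Rle_trans _ _ _ (Rmin_r _ _) (Rmin_l _ _).
    have Hk3 : (a + 1) * k <= eta / 2.
      have -> : eta / 2 = (a + 1) * (eta / (2 * (a + 1))) by field; lra.
      apply: Rmult_le_compat_l; first lra.
      exact: Rle_trans (Rmin_r _ _) (Rmin_r _ _).
    have := Qbelow (u - k) ltac:(lra).
    have := Hd1 (u - k) ltac:(lra) ltac:(rewrite Rabs_left; lra).
    rewrite (Rabs_left (u - k - u)); last lra.
    have := Rle_abs (g u - g (u - k)); rewrite Rabs_minus_sym.
    have : (a + e) * (u - k - s) <= (a + e) * (u - s) by apply: Rmult_le_compat_l; lra.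
    rewrite /eta in Hk3 *; lra.
  - move=> u Hu Qu; have [d [Hd Hd1]] := Hloc u ltac:(lra) e He.
    exists d; split=> // v Hv Hvt.
    have := Hd1 v ltac:(lra) ltac:(rewrite Rabs_right; lra).
    rewrite (Rabs_right (v - u)); last lra.
    have := Rle_abs (g v - g u); nra.
apply: Rle_plus_epsilon => eta Heta.
have He : 0 < eta / (t - s + 1) by apply: Rdiv_lt_0_compat; lra.
have := barrier _ He t ltac:(lra).
have : eta / (t - s + 1) * (t - s) <= eta.
  apply: (Rmult_le_reg_r (t - s + 1)); first lra.
  have -> : eta / (t - s + 1) * (t - s) * (t - s + 1) = eta * (t - s) by field; lra.
  nra.
nra.
Qed.

Lemma ex_uniform_radius (T : finType) (Q : T -> R -> Prop) :
  (forall i, exists d, 0 < d /\ forall h, Rabs h < d -> Q i h) ->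
  exists d, 0 < d /\ forall h, Rabs h < d -> forall i, Q i h.
Proof.
move=> HQ.
suff [d [Hd Hl]] : exists d, 0 < d /\ forall h, Rabs h < d -> forall i, i \in enum T -> Q i h.
  by exists d; split=> // h Hh i; apply: Hl; rewrite ?mem_enum.
elim: (enum T) => [|i l [d [Hd IH]]]; first by exists 1; split; [lra|].
have [d' [Hd' H']] := HQ i.
exists (Rmin d d'); split; first exact: Rmin_pos.
move=> h Hh j; rewrite in_cons => /orP [/eqP ->|Hj].
  by apply: H'; have := Rmin_r d d'; lra.
by apply: IH => //; have := Rmin_l d d'; lra.
Qed.

Lemma vsub_diag {n} (x : Vec n) : vsub x x = vzero. Proof. vec_ext. Qed.
Lemma vsub_vzero {n} (x : Vec n) : vsub x vzero = x. Proof. vec_ext. Qed.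
Lemma vaddK {n} (x y : Vec n) : vsub (vadd x y) x = y. Proof. vec_ext. Qed.

Definition unit_vec {n} (i : 'I_n) : Vec n := fun j => if j == i then 1 else 0.

Section Norm.
Context {n : nat} {nrm : Vec n -> R}.
Hypothesis Hnrm : is_norm nrm.

Lemma nrm_ge0 x : 0 <= nrm x. Proof. by case: Hnrm. Qed.

Lemma nrm_eq0 x : nrm x = 0 -> x = vzero.
Proof. by case: Hnrm => _ [H _]; apply: H. Qed.

Lemma nrm_scale c x : nrm (vscale c x) = Rabs c * nrm x.
Proof. by case: Hnrm => _ [_ [H _]]. Qed.

Lemma nrm_add_le x y : nrm (vadd x y) <= nrm x + nrm y.
Proof. by case: Hnrm => _ [_ [_ H]]. Qed.

Lemma nrm_vzero : nrm vzero = 0.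
Proof.
have -> : (vzero : Vec n) = vscale 0 vzero by vec_ext.
by rewrite nrm_scale Rabs_R0 Rmult_0_l.
Qed.

Lemma nrm_vsubC x y : nrm (vsub x y) = nrm (vsub y x).
Proof.
have -> : vsub x y = vscale (-1) (vsub y x) by vec_ext.
by rewrite nrm_scale Rabs_Ropp Rabs_R1 Rmult_1_l.
Qed.

Lemma nrm_vsub_le x y : nrm (vsub x y) <= nrm x + nrm y.
Proof.
have -> : vsub x y = vadd x (vscale (-1) y) by vec_ext.
apply: Rle_trans (nrm_add_le _ _) _.
by rewrite nrm_scale Rabs_Ropp Rabs_R1 Rmult_1_l; apply: Rle_refl.
Qed.

Lemma nrm_vsub_triangle x y z : nrm (vsub z x) <= nrm (vsub z y) + nrm (vsub y x).
Proof.
have -> : vsub z x = vadd (vsub z y) (vsub y x) by vec_ext.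
exact: nrm_add_le.
Qed.

Lemma nrm_vsub_rev x y z : Rabs (nrm (vsub x z) - nrm (vsub y z)) <= nrm (vsub x y).
Proof.
have := nrm_vsub_triangle z y x; have := nrm_vsub_triangle z x y.
rewrite (nrm_vsubC y x) => *; apply: Rabs_le; lra.
Qed.

Lemma ex_vec_of_nrm (i : 'I_n) {r} : 0 <= r -> exists x, nrm x = r.
Proof.
move=> Hr; set e := unit_vec i.
have He : 0 < nrm e.
  case: (Rle_lt_or_eq_dec _ _ (nrm_ge0 e)) => // /esym /nrm_eq0 /(f_equal (fun x => x i)).
  by rewrite /e /unit_vec /vzero eqxx; lra.
exists (vscale (r / nrm e) e); rewrite nrm_scale Rabs_right; first by field; lra.
by apply: Rle_ge; apply: Rmult_le_pos => //; apply: Rlt_le; apply: Rinv_0_lt_compat.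
Qed.

Lemma nrm_le_sup : exists M, 0 <= M /\
  forall x c, (forall i, Rabs (x i) <= c) -> nrm x <= M * c.
Proof.
suff [M [HM Hsupp]] : exists M, 0 <= M /\ forall x c, (forall i, i \notin enum 'I_n -> x i = 0) ->
    (forall i, Rabs (x i) <= c) -> nrm x <= M * c.
  by exists M; split=> // x c; apply: Hsupp => i; rewrite mem_enum.
elim: (enum 'I_n) => [|i l [M [HM IH]]].
  exists 0; split=> [|x c Hx _]; first exact: Rle_refl.
  have -> : x = vzero by apply: functional_extensionality => j; apply: Hx.
  by rewrite nrm_vzero Rmult_0_l; apply: Rle_refl.
set e := unit_vec i.
have He := nrm_ge0 e.
exists (nrm e + M); split=> [|x c Hx Hc]; first lra.
pose x' : Vec n := fun j => if j == i then 0 else x j.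
have -> : x = vadd (vscale (x i) e) x'.
  by apply: functional_extensionality => j; rewrite /vadd /vscale /e /unit_vec /x';
    case: (eqVneq j i) => [->|_]; ring.
have Hx' : nrm x' <= M * c.
  apply: IH => j; rewrite /x'; case: (eqVneq j i) => // Hji.
  - by move=> Hj; apply: Hx; rewrite in_cons negb_or Hji.
  - by rewrite Rabs_R0; apply: Rle_trans (Rabs_pos _) (Hc i).
apply: Rle_trans (nrm_add_le _ _) _; rewrite nrm_scale.
have := Hc i; have := Rabs_pos (x i); nra.
Qed.

Lemma C1_on_linear_approx {delta} {Z Z' : R -> Vec n} {u e} :
  C1_on delta Z Z' -> - delta <= u <= delta -> 0 < e ->
  exists d, 0 < d /\ forall h, Rabs h < d -> - delta <= u + h <= delta ->
    nrm (vsub (vsub (Z (u + h)) (Z u)) (vscale h (Z' u))) <= e * Rabs h.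
Proof.
move=> HZ Hu He; have [M [HM Hsup]] := nrm_le_sup.
have Heta : 0 < e / (M + 1) by apply: Rdiv_lt_0_compat; lra.
have [d [Hd Hquot]] : exists d, 0 < d /\ forall h, Rabs h < d -> forall i, h <> 0 ->
    - delta <= u + h <= delta -> Rabs ((Z (u + h) i - Z u i) / h - Z' u i) < e / (M + 1).
  apply: ex_uniform_radius => i; have [Hder _] := HZ u Hu i.
  have [d [Hd Hd1]] := Hder _ Heta.
  by exists d; split=> // h Hh Hh0 Hr; apply: Hd1.
exists d; split=> // h Hh Hr.
case: (Req_dec h 0) => [->|Hh0].
  rewrite Rabs_R0 Rmult_0_r Rplus_0_r.
  have -> : vsub (vsub (Z u) (Z u)) (vscale 0 (Z' u)) = vzero by vec_ext.
  by rewrite nrm_vzero; apply: Rle_refl.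
pose y : Vec n := fun i => (Z (u + h) i - Z u i) / h - Z' u i.
have -> : vsub (vsub (Z (u + h)) (Z u)) (vscale h (Z' u)) = vscale h y.
  by apply: functional_extensionality => i; rewrite /vsub /vscale /y; field.
have Hy : nrm y <= M * (e / (M + 1)).
  by apply: Hsup => i; apply: Rlt_le; apply: Hquot.
have : M * (e / (M + 1)) <= e.
  apply: (Rmult_le_reg_r (M + 1)); first lra.
  have -> : M * (e / (M + 1)) * (M + 1) = M * e by field; lra.
  nra.
rewrite nrm_scale; have := Rabs_pos h; nra.
Qed.

Lemma C1_on_lipschitz delta A (Z Z' : R -> Vec n) :
  C1_on delta Z Z' -> (forall u, - delta <= u <= delta -> nrm (Z' u) <= A) ->
  forall t tb, - delta <= t <= delta -> - delta <= tb <= delta ->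
    nrm (vsub (Z t) (Z tb)) <= A * Rabs (t - tb).
Proof.
move=> HZ HA t tb; wlog Hle : t tb / tb <= t => [Hwlog Ht Htb|Ht Htb].
  case: (Rle_dec tb t) => [|/Rnot_le_lt Hlt]; first by move=> Hle; apply: Hwlog.
  by rewrite nrm_vsubC Rabs_minus_sym; apply: Hwlog => //; lra.
rewrite Rabs_right; last lra.
have HA0 : 0 <= A := Rle_trans _ _ _ (nrm_ge0 _) (HA t Ht).
apply: (mean_value_le (fun v => nrm (vsub (Z v) (Z tb)))) => //.
  have -> : vsub (Z tb) (Z tb) = vzero by vec_ext.
  by rewrite nrm_vzero; apply: Rle_refl.
move=> u Hu e He.
have Hu' : - delta <= u <= delta by lra.
have [d [Hd Hd1]] := C1_on_linear_approx HZ Hu' He.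
exists d; split=> // v Hv Hvu.
have := Hd1 (v - u) Hvu ltac:(lra); rewrite (_ : u + (v - u) = v); last ring.
move=> Happrox; apply: Rle_trans (nrm_vsub_rev _ _ _) _.
have -> : vsub (Z v) (Z u) = vadd (vscale (v - u) (Z' u))
    (vsub (vsub (Z v) (Z u)) (vscale (v - u) (Z' u))) by vec_ext.
apply: Rle_trans (nrm_add_le _ _) _; rewrite nrm_scale.
have := HA u ltac:(lra); have := Rabs_pos (v - u); nra.
Qed.

End Norm.

Lemma is_norm_abs1 : is_norm (fun x : Vec 1 => Rabs (x ord0)).
Proof.
split; first by move=> x; apply: Rabs_pos.
split.
  move=> x Hx; apply: functional_extensionality => i; rewrite ord1.
  by apply: NNPP => /Rabs_no_R0.
split; first by move=> c x; rewrite /vscale Rabs_mult.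
by move=> x y; apply: Rabs_triang.
Qed.

Lemma C1_on_component_lipschitz {n} delta A (Z Z' : R -> Vec n) (i : 'I_n) :
  C1_on delta Z Z' -> (forall u, - delta <= u <= delta -> Rabs (Z' u i) <= A) ->
  forall t tb, - delta <= t <= delta -> - delta <= tb <= delta ->
    Rabs (Z t i - Z tb i) <= A * Rabs (t - tb).
Proof.
move=> HZ HA.
by apply: (C1_on_lipschitz is_norm_abs1 _ _ (fun s _ => Z s i) (fun s _ => Z' s i))
  => // t Ht j; apply: HZ.
Qed.

Lemma le_of_self_improving_bound (E : R -> Prop) K c : c < 1 -> bound E ->
  (exists y, E y) -> (forall g, is_upper_bound E g -> forall y, E y -> y <= K + c * g) ->
  forall y, E y -> y <= K / (1 - c).
Proof.
move=> Hc Eb Ene Himp y Ey.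
have [g [Hub Hlub]] := completeness E Eb Ene.
have Hg : g <= K + c * g by apply: Hlub => z Ez; apply: Himp.
apply: Rle_trans (Hub y Ey) _.
apply: (Rmult_le_reg_r (1 - c)); first lra.
have -> : K / (1 - c) * (1 - c) = K by field; lra.
lra.
Qed.

Section LipschitzField.
Context {n : nat} {nrm : Vec n -> R} {H : Pt n -> Vec n} {P : Vec n}.
Context {eps Lam L0 L1 C0 C1 : R}.
Hypothesis Hnrm : is_norm nrm.
Hypothesis HLam : forall {t tb a b c d},
  in_N nrm eps P (t, a, b, c, d) -> in_N nrm eps P (tb, a, b, c, d) ->
  nrm (vsub (H (tb, a, b, c, d)) (H (t, a, b, c, d))) <= Lam * Rabs (tb - t).
Hypothesis HL : forall {t a b ab bb c d},
  in_N nrm eps P (t, a, b, c, d) -> in_N nrm eps P (t, ab, bb, c, d) ->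
  nrm (vsub (H (t, ab, bb, c, d)) (H (t, a, b, c, d)))
    <= L0 * nrm (vsub ab a) + L1 * nrm (vsub bb b).
Hypothesis HC : forall {t a b c d cb db},
  in_N nrm eps P (t, a, b, c, d) -> in_N nrm eps P (t, a, b, cb, db) ->
  nrm (vsub (H (t, a, b, cb, db)) (H (t, a, b, c, d)))
    <= C0 * nrm (vsub cb c) + C1 * nrm (vsub db d).

(* The two half-way points have distances to [calP P] summing to those of the endpoints. *)
Lemma in_N_exchange_t {t a b c d t' a' b' c' d'} :
  in_N nrm eps P (t, a, b, c, d) -> in_N nrm eps P (t', a', b', c', d') ->
  in_N nrm eps P (t', a, b, c, d) \/ in_N nrm eps P (t, a', b', c', d').
Proof. rewrite /in_N /dist5 /calP /=; lra. Qed.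

Lemma in_N_exchange_cd {t a b c d a' b' c' d'} :
  in_N nrm eps P (t, a, b, c, d) -> in_N nrm eps P (t, a', b', c', d') ->
  in_N nrm eps P (t, a', b', c, d) \/ in_N nrm eps P (t, a, b, c', d').
Proof. rewrite /in_N /dist5 /calP /=; lra. Qed.

Lemma H_lipschitz_state {t a b c d a' b' c' d'} :
  in_N nrm eps P (t, a, b, c, d) -> in_N nrm eps P (t, a', b', c', d') ->
  nrm (vsub (H (t, a', b', c', d')) (H (t, a, b, c, d))) <=
  (L0 * nrm (vsub a' a) + L1 * nrm (vsub b' b)) + (C0 * nrm (vsub c' c) + C1 * nrm (vsub d' d)).
Proof.
move=> X X'; have [Y|Y] := in_N_exchange_cd X X'.
- apply: Rle_trans (nrm_vsub_triangle Hnrm _ (H (t, a', b', c, d)) _) _.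
  by have := HL X Y; have := HC Y X'; lra.
- apply: Rle_trans (nrm_vsub_triangle Hnrm _ (H (t, a, b, c', d')) _) _.
  by have := HC X Y; have := HL Y X'; lra.
Qed.

Lemma H_lipschitz {t a b c d t' a' b' c' d'} :
  in_N nrm eps P (t, a, b, c, d) -> in_N nrm eps P (t', a', b', c', d') ->
  nrm (vsub (H (t', a', b', c', d')) (H (t, a, b, c, d))) <=
  Lam * Rabs (t' - t) + (L0 * nrm (vsub a' a) + L1 * nrm (vsub b' b))
  + (C0 * nrm (vsub c' c) + C1 * nrm (vsub d' d)).
Proof.
move=> X X'; have [Y|Y] := in_N_exchange_t X X'.
- apply: Rle_trans (nrm_vsub_triangle Hnrm _ (H (t', a, b, c, d)) _) _.
  by have := HLam X Y; have := H_lipschitz_state Y X'; lra.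
- apply: Rle_trans (nrm_vsub_triangle Hnrm _ (H (t, a', b', c', d')) _) _.
  by have := H_lipschitz_state X Y; have := HLam Y X'; lra.
Qed.

Lemma H_constants_ge0 (i : 'I_n) : 0 < eps ->
  0 <= Lam /\ 0 <= L0 /\ 0 <= L1 /\ 0 <= C0 /\ 0 <= C1.
Proof.
move=> Heps; have [x Hx] := ex_vec_of_nrm Hnrm i (Rlt_le 0 eps Heps).
have Hz : nrm (vsub vzero vzero) = 0 by rewrite vsub_diag (nrm_vzero Hnrm).
have HP : nrm (vsub P P) = 0 by rewrite vsub_diag (nrm_vzero Hnrm).
have Hx0 : nrm (vsub x vzero) = eps by rewrite vsub_vzero.
have HPx : nrm (vsub (vadd P x) P) = eps by rewrite vaddK.
have in_N_simpl t a b c d :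
    Rabs t + nrm (vsub a vzero) + nrm (vsub b vzero) + nrm (vsub c P) + nrm (vsub d P) <= eps ->
    in_N nrm eps P (t, a, b, c, d).
  by rewrite /in_N /dist5 /calP /= Rminus_0_r.
have X0 : in_N nrm eps P (0, vzero, vzero, P, P).
  by apply: in_N_simpl; rewrite Hz HP Rabs_R0; lra.
have Xt : in_N nrm eps P (eps, vzero, vzero, P, P).
  by apply: in_N_simpl; rewrite Hz HP Rabs_right; lra.
have Xa : in_N nrm eps P (0, x, vzero, P, P).
  by apply: in_N_simpl; rewrite Hx0 Hz HP Rabs_R0; lra.
have Xb : in_N nrm eps P (0, vzero, x, P, P).
  by apply: in_N_simpl; rewrite Hx0 Hz HP Rabs_R0; lra.
have Xc : in_N nrm eps P (0, vzero, vzero, vadd P x, P).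
  by apply: in_N_simpl; rewrite HPx Hz HP Rabs_R0; lra.
have Xd : in_N nrm eps P (0, vzero, vzero, P, vadd P x).
  by apply: in_N_simpl; rewrite HPx Hz HP Rabs_R0; lra.
have coef_ge0 k y : nrm y <= k * eps -> 0 <= k by have := nrm_ge0 Hnrm y; nra.
split; [|split; [|split; [|split]]].
- have := HLam X0 Xt; rewrite Rminus_0_r Rabs_right; [exact: coef_ge0 | lra].
- have := HL X0 Xa; rewrite Hx0 Hz Rmult_0_r Rplus_0_r; exact: coef_ge0.
- have := HL X0 Xb; rewrite Hx0 Hz Rmult_0_r Rplus_0_l; exact: coef_ge0.
- have := HC X0 Xc; rewrite HPx HP Rmult_0_r Rplus_0_r; exact: coef_ge0.
- have := HC X0 Xd; rewrite HPx HP Rmult_0_r Rplus_0_l; exact: coef_ge0.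
Qed.

Lemma delay_solution_derivative_lipschitz (i1 : 'I_n) delta alpha mu (W W' : R -> Vec n) :
  0 < eps -> C0 + C1 < 1 -> (Lam + (L0 + L1) * alpha) / (1 - C0 - C1) <= mu ->
  (forall t, - delta <= t <= delta -> - delta <= W t i1 <= delta) ->
  (forall t, - delta <= t <= delta -> W' t = H (VZ i1 W W' t)) ->
  (forall t, - delta <= t <= delta -> in_N nrm eps P (VZ i1 W W' t)) ->
  (forall t, - delta <= t <= delta -> nrm (W' t) <= alpha) ->
  (forall t tb, - delta <= t <= delta -> - delta <= tb <= delta ->
     nrm (vsub (W t) (W tb)) <= alpha * Rabs (t - tb)) ->
  (forall t tb, - delta <= t <= delta -> - delta <= tb <= delta ->
     Rabs (W t i1 - W tb i1) <= Rabs (t - tb)) ->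
  forall t tb, - delta <= t <= delta -> - delta <= tb <= delta ->
    nrm (vsub (W' t) (W' tb)) <= mu * Rabs (t - tb).
Proof.
move=> Heps HC01 Hmu Hw1 Hode HWN HW' LipW Lipw1 t tb Ht Htb.
have [HLam0 [HL00 [HL10 [HC00 HC10]]]] := H_constants_ge0 i1 Heps.
have Halpha : 0 <= alpha := Rle_trans _ _ _ (nrm_ge0 Hnrm _) (HW' t Ht).
set r := Rabs (t - tb).
have Hr : 0 <= r := Rabs_pos _.
(* [E] collects the oscillations of [W'] at scale [r]; by the delay equation its
   supremum [g] satisfies [g <= (Lam + (L0 + L1) alpha) r + (C0 + C1) g] *)
pose E y := exists u v, - delta <= u <= delta /\ - delta <= v <= delta /\
  Rabs (u - v) <= r /\ y = nrm (vsub (W' u) (W' v)).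
suff : nrm (vsub (W' t) (W' tb)) <= (Lam + (L0 + L1) * alpha) * r / (1 - (C0 + C1)).
  rewrite (_ : 1 - (C0 + C1) = 1 - C0 - C1); last ring.
  move=> Hosc; apply: Rle_trans Hosc _.
  rewrite /Rdiv Rmult_assoc (Rmult_comm r) -Rmult_assoc.
  by apply: Rmult_le_compat_r.
have Ett : E (nrm (vsub (W' t) (W' tb))) by exists t, tb; do 3 split=> //; exact: Rle_refl.
apply: (le_of_self_improving_bound E) (Ett) => //.
- exists (alpha + alpha); move=> _ [u [v [Hu [Hv [_ ->]]]]].
  by apply: Rle_trans (nrm_vsub_le Hnrm _ _) _; apply: Rplus_le_compat; apply: HW'.
- exact: ex_intro _ _ Ett.
move=> g Hg _ [u [v [Hu [Hv [Huv ->]]]]].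
have Hwuv : Rabs (W u i1 - W v i1) <= r := Rle_trans _ _ _ (Lipw1 _ _ Hu Hv) Huv.
have Hosc_u : nrm (vsub (W' u) (W' v)) <= g by apply: Hg; exists u, v.
have Hosc_w : nrm (vsub (W' (W u i1)) (W' (W v i1))) <= g.
  by apply: Hg; exists (W u i1), (W v i1); have := Hw1 u Hu; have := Hw1 v Hv.
have HWu : nrm (vsub (W u) (W v)) <= alpha * r.
  by apply: Rle_trans (LipW _ _ Hu Hv) _; apply: Rmult_le_compat_l.
have HWw : nrm (vsub (W (W u i1)) (W (W v i1))) <= alpha * r.
  apply: Rle_trans (LipW _ _ (Hw1 u Hu) (Hw1 v Hv)) _.
  by apply: Rmult_le_compat_l.
rewrite {1}(Hode u Hu) {1}(Hode v Hv).
apply: Rle_trans (H_lipschitz (HWN v Hv) (HWN u Hu)) _.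
have := Rmult_le_compat_l _ _ _ HLam0 Huv.
have := Rmult_le_compat_l _ _ _ HL00 HWu; have := Rmult_le_compat_l _ _ _ HL10 HWw.
have := Rmult_le_compat_l _ _ _ HC00 Hosc_u; have := Rmult_le_compat_l _ _ _ HC10 Hosc_w.
lra.
Qed.

End LipschitzField.

Theorem lemma4p5
  (n : nat) (hn : (0 < n)%N)
  (nrm : Vec n -> R) (Hnrm : is_norm nrm)
  (D : Pt n -> Prop) (HDopen : is_open nrm D)
  (H : Pt n -> Vec n) (HHcont : continuous_on nrm D H)
  (P : Vec n) (eps Lam L0 L1 C0 C1 : R)
  (HP : P = H (calP P))
  (Hp1 : Rabs (P (Ordinal hn)) <= 1)
  (Heps : 0 < eps)
  (HND : forall X, in_N nrm eps P X -> D X)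
  (HLam : forall t tb a b c d,
     in_N nrm eps P (t, a, b, c, d) -> in_N nrm eps P (tb, a, b, c, d) ->
     nrm (vsub (H (tb, a, b, c, d)) (H (t, a, b, c, d))) <= Lam * Rabs (tb - t))
  (HL : forall t a b ab bb c d,
     in_N nrm eps P (t, a, b, c, d) -> in_N nrm eps P (t, ab, bb, c, d) ->
     nrm (vsub (H (t, ab, bb, c, d)) (H (t, a, b, c, d)))
       <= L0 * nrm (vsub ab a) + L1 * nrm (vsub bb b))
  (HC : forall t a b c d cb db,
     in_N nrm eps P (t, a, b, c, d) -> in_N nrm eps P (t, a, b, cb, db) ->
     nrm (vsub (H (t, a, b, cb, db)) (H (t, a, b, c, d)))
       <= C0 * nrm (vsub cb c) + C1 * nrm (vsub db d))
  (HC01 : C0 + C1 < 1)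
  (Hh1 : forall X, in_N nrm eps P X -> Rabs (H X (Ordinal hn)) <= 1)
  (alpha : R)
  (Halpha_ub : forall X, in_N nrm eps P X -> nrm (H X) <= alpha)
  (Halpha_att : exists X, in_N nrm eps P X /\ nrm (H X) = alpha)
  (mu : R)
  (Hmu : (Lam + (L0 + L1) * alpha) / (1 - C0 - C1) <= mu)
  (delta : R) (Hdelta : 0 < delta)
  (W W' : R -> Vec n)
  (HW : C1_on delta W W')
  (Hw1 : forall t, - delta <= t <= delta ->
     - delta <= W t (Ordinal hn) <= delta)
  (Hode : forall t, - delta <= t <= delta ->
     W' t = H (VZ (Ordinal hn) W W' t))
  (HW0 : W 0 = vzero) (HW'0 : W' 0 = P)
  (HWN : forall t, - delta <= t <= delta ->
     in_N nrm eps P (VZ (Ordinal hn) W W' t)) :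
  in_calC nrm (Ordinal hn) eps P alpha mu delta W W'.
Proof.
set i1 := Ordinal hn.
have HW'_bound t : - delta <= t <= delta -> nrm (W' t) <= alpha.
  by move=> Ht; rewrite (Hode t Ht); apply/Halpha_ub/HWN.
have Hw1'_bound t : - delta <= t <= delta -> Rabs (W' t i1) <= 1.
  by move=> Ht; rewrite (Hode t Ht); apply/Hh1/HWN.
have LipW := C1_on_lipschitz Hnrm _ _ _ _ HW HW'_bound.
have Lipw1 := C1_on_component_lipschitz _ _ _ _ _ HW Hw1'_bound.
have Lipw1' t tb : - delta <= t <= delta -> - delta <= tb <= delta ->
    Rabs (W t i1 - W tb i1) <= Rabs (t - tb).
  by move=> Ht Htb; move: (Lipw1 t tb Ht Htb); rewrite Rmult_1_l.
split=> //; do 2 split=> //; split.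
  move=> t Ht; have := Lipw1' t 0 Ht ltac:(lra).
  by rewrite HW0 /vzero !Rminus_0_r.
do 3 split=> //.
exact: (delay_solution_derivative_lipschitz Hnrm HLam HL HC i1 _ alpha mu W W' Heps HC01 Hmu
  Hw1 Hode HWN HW'_bound LipW Lipw1').
Qed.
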